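(* Assume (P.1) and (P.2) hold. Let $N\in\mathbb N$ and let $\Omega\in\mathscr A$ be $N$-admissible with $\mathfrak m(\Omega)\in(0,+\infty)$. Then $\Lambda_N(\Omega)\le h_N(\Omega)$. If moreover (P.4) and (P.7) hold, then $N\,h_1(\Omega)\le\Lambda_N(\Omega)$; in particular $h_1(\Omega)=\lambda_{1,1}(\Omega)$.
   Context: $(X,\mathscr A,\mathfrak m)$ is a non-negative $\sigma$-finite measure space; for $A,B\in\mathscr A$, ''$A\subset B$'' means $\mathfrak m(A\setminus B)=0$. $P\colon\mathscr A\to[0,+\infty]$ is a proper functional. (P.1): $P(\emptyset)=0$. (P.2): $P(X)=0$. (P.4): if $\chi_{E_k}\to\chi_E$ in $L^1(X,\mathfrak m)$ then $P(E)\le\liminf_k P(E_k)$. (P.7): $P(E)=P(X\setminus E)$ for all $E\in\mathscr A$. An $N$-cluster is a family $\{\mathcal E(i)\}_{i=1}^N\subset\mathscr A$ with $0<\mathfrak m(\mathcal E(i))<+\infty$, $P(\mathcal E(i))<+\infty$, $\mathfrak m(\mathcal E(i)\cap\mathcal E(j))=0$ for $i\ne j$; $\Omega$ is $N$-admissible if it contains an $N$-cluster; $h_N(\Omega)=\inf\{\sum_{i=1}^N P(\mathcal E(i))/\mathfrak m(\mathcal E(i))\}$ over $N$-clusters in $\Omega$. For $\mathfrak m$-measurable $u$, $\mathrm{Var}(u):=\int_{\mathbb R}P(\{u>t\})\,dt$ if $t\mapsto P(\{u>t\})$ is $\mathscr L^1$-measurable, $+\infty$ otherwise; $BV(X,\mathfrak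 m)=\{u\in L^1(X,\mathfrak m):\mathrm{Var}(u)<+\infty\}$; $BV_0(\Omega,\mathfrak m)=\{u\in BV(X,\mathfrak m):\int_{X\setminus\Omega}|u|\,d\mathfrak m=0\}$. Define $\Lambda_N(\Omega)=\inf\sum_{i=1}^N \mathrm{Var}(u_i)/\|u_i\|_1$, the infimum over $N$-tuples $(u_1,\dots,u_N)$ with $u_i\in BV_0(\Omega,\mathfrak m)$, $\|u_i\|_1>0$, and pairwise disjoint supports ($\mathfrak m(\{u_i\neq0\}\cap\{u_j\ne0\})=0$ for $i\ne j$). $\lambda_{1,1}(\Omega):=\Lambda_1(\Omega)=\inf\{\mathrm{Var}(u)/\|u\|_1: u\in BV_0(\Omega,\mathfrak m),\ \|u\|_1>0\}$. *)

From HB Require Import structures.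
From mathcomp Require Import all_boot all_order all_algebra.
From mathcomp Require Import all_classical all_reals all_analysis.
From mathcomp Require Import measurable_realfun lebesgue_integral.

Unset Strict Implicit.
Unset Printing Implicit Defensive.
Import Order.TTheory GRing.Theory Num.Theory.
Local Open Scope classical_set_scope.
Local Open Scope ring_scope.
Local Open Scope ereal_scope.

(* (X, A, m) is [T : measurableType d] with [mu : {measure set T -> \bar R}];
   P : set T -> \bar R is the perimeter-like functional (only its values on
   measurable sets matter). *)

(* The real line endowed with the completed (Lebesgue) sigma-algebra, i.e.
   the sigma-algebra of L^1-measurable sets. *)
Definition RLeb (R : realType) :=
  caratheodory_type (R:=R) (@wlength R idfun)^*%mu.

Section defs.
Context {d : measure_display} {T : measurableType d} {R : realType}.
Variables (mu : {measure set T -> \bar R}) (P : set T -> \bar R).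

Definition msub (A B : set T) := mu (A `\` B) = 0.

Definition P_nonneg := forall E, measurable E -> 0 <= P E.
Definition P_proper := exists E, measurable E /\ P E < +oo.
(* P is a functional on A, whose elements are identified up to null sets *)
Definition P_null_invariant :=
  forall E F, measurable E -> measurable F -> msub E F -> msub F E -> P E = P F.
Definition P1 := P set0 = 0.
Definition P2 := P setT = 0.
Definition P4 := forall (E_ : nat -> set T) (E : set T),
  (forall k, measurable (E_ k)) -> measurable E ->
  (fun k => \int[mu]_x `|(\1_(E_ k) x)%:E - (\1_E x)%:E|) @ \oo --> 0 ->
  P E <= limn_einf (fun k => P (E_ k)).
Definition P7 := forall E, measurable E -> P E = P (~` E).

Definition cluster_in (N : nat) (Om : set T) (E : 'I_N -> set T) :=
  [/\ forall i, measurable (E i),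
      forall i, msub (E i) Om,
      forall i, 0 < mu (E i) < +oo,
      forall i, P (E i) < +oo &
      forall i j, i != j -> mu (E i `&` E j) = 0].

Definition admissible (N : nat) (Om : set T) := exists E, cluster_in N Om E.

Definition h_ (N : nat) (Om : set T) : \bar R :=
  ereal_inf [set x | exists E, cluster_in N Om E /\
     x = (\sum_(i < N) (fine (P (E i)) / fine (mu (E i)))%R)%:E ].

(* total variation via the coarea-type formula *)
Definition Var (u : T -> R) : \bar R :=
  if `[< measurable_fun (setT : set (RLeb R))
          (fun t : RLeb R => P [set x | (t < u x)%R]) >]
  then \int[@completed_lebesgue_measure R]_(t in (setT : set (RLeb R)))
          P [set x | (t < u x)%R]
  else +oo.

Definition norm1 (u : T -> R) : \bar R := \int[mu]_x `|(u x)%:E|.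

Definition BV (u : T -> R) :=
  measurable_fun setT u /\ mu.-integrable setT (EFin \o u) /\ Var u < +oo.

Definition BV0 (Om : set T) (u : T -> R) :=
  BV u /\ \int[mu]_(x in ~` Om) `|(u x)%:E| = 0.

Definition admissible_tuple (N : nat) (Om : set T) (u : 'I_N -> T -> R) :=
  [/\ forall i, BV0 Om (u i),
      forall i, 0 < norm1 (u i) &
      forall i j, i != j ->
        mu ([set x | u i x != 0%R] `&` [set x | u j x != 0%R]) = 0].

Definition Lambda_ (N : nat) (Om : set T) : \bar R :=
  ereal_inf [set x | exists u, admissible_tuple N Om u /\
     x = (\sum_(i < N) (fine (Var (u i)) / fine (norm1 (u i)))%R)%:E ].

Definition lambda11 (Om : set T) : \bar R := Lambda_ 1 Om.

End defs.

From HB Require Import structures.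
From mathcomp Require Import all_boot all_order all_algebra.
From mathcomp Require Import all_classical all_reals all_analysis.
From mathcomp Require Import measurable_realfun lebesgue_integral.
Import Order.TTheory GRing.Theory Num.Theory.
Local Open Scope classical_set_scope.
Local Open Scope ring_scope.
Local Open Scope ereal_scope.

(* Indicators of an N-cluster are admissible test functions with
   Var 1_E = P(E) (by (P.1) and (P.2)) and ||1_E||_1 = m(E), whence
   Lambda_N <= h_N.  Conversely, Tonelli (the layer-cake formula) gives
   ||u||_1 = int m(A_t) dt with A_t = {u > t} for t >= 0 and A_t = {u <= t}
   for t < 0.  Each A_t lies in the support of u, hence (up to a null set) in
   Omega, and by (P.7) P(A_t) = P({u > t}); so h_1 m(A_t) <= P({u > t}) and
   integrating in t yields h_1 ||u||_1 <= Var u.  Summing over the N functions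
   gives N h_1 <= Lambda_N. *)

Lemma completed_lebesgue_measure_itv (R : realType) (i : interval R) :
  @completed_lebesgue_measure R [set` i] =
  (if i.1 < i.2 then (i.2 : \bar R) - i.1 else 0)%E.
Proof. exact: lebesgue_measure_itv. Qed.

Lemma measurable_fun_RLeb_val (R : realType) :
  measurable_fun setT (fun t : RLeb R => (t : R)).
Proof. by move=> _ B mB; rewrite setTI; exact: sub_caratheodory. Qed.

Lemma mem_RLeb_co01 (R : realType) (t : RLeb R) :
  (t \in (`[0%R, 1%R[%classic : set (RLeb R))) = (0 <= (t : R) < 1)%R.
Proof. by apply/idP/idP => [/set_mem|h]; [|apply/mem_set]; rewrite /= in_itv. Qed.

Section real_comparison.
Context {d : measure_display} {T : measurableType d} {R : realType}.
Implicit Types f g : T -> R.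

Lemma measurable_ltr_set f g : measurable_fun setT f -> measurable_fun setT g ->
  measurable [set z | (f z < g z)%R].
Proof.
move=> mf mg; have := measurable_fun_ltr mf mg measurableT (Y := [set true]) I.
by rewrite setTI; congr measurable; apply/seteqP; split.
Qed.

Lemma measurable_ler_set f g : measurable_fun setT f -> measurable_fun setT g ->
  measurable [set z | (f z <= g z)%R].
Proof.
move=> mf mg; have := measurable_fun_ler mf mg measurableT (Y := [set true]) I.
by rewrite setTI; congr measurable; apply/seteqP; split.
Qed.

End real_comparison.

Section layer_cake.
Context {d : measure_display} {T : measurableType d} {R : realType}.
Variable mu : {measure set T -> \bar R}.
Hypothesis mu_sigma_finite : sigma_finite setT mu.
Implicit Types u : T -> R.

(* A copy of [mu] carrying the sigma-finiteness instance required by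
   Fubini-Tonelli. *)
Let mu' := (mu : set T -> \bar R).
HB.instance Definition _ := Measure.on mu'.
HB.instance Definition _ :=
  @Measure_isSigmaFinite.Build _ _ _ mu' mu_sigma_finite.

Definition layer (u : T -> R) (t : R) : set T :=
  if (0 <= t)%R then [set x | (t < u x)%R] else ~` [set x | (t < u x)%R].

(* The region between 0 and the graph of [u], sliced by [layer] in [t] and
   by an interval of length [|u x|] in [x]. *)
Definition layer_region (u : T -> R) : set (T * RLeb R) :=
  ([set z | (0 <= (z.2 : R))%R] `&` [set z | ((z.2 : R) < u z.1)%R]) `|`
  ([set z | (u z.1 <= (z.2 : R))%R] `&` [set z | ((z.2 : R) < 0)%R]).

Lemma measurable_layer_region u : measurable_fun setT u ->
  measurable (layer_region u).
Proof.
move=> meas_u.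
have m1 : measurable_fun setT (fun z : T * RLeb R => u z.1).
  exact: measurableT_comp.
have m2 : measurable_fun setT (fun z : T * RLeb R => (z.2 : R)).
  exact: measurableT_comp (measurable_fun_RLeb_val R) _.
by apply: measurableU; apply: measurableI;
  apply: measurable_ler_set || apply: measurable_ltr_set.
Qed.

Lemma ysection_layer_region u (t : RLeb R) :
  ysection (layer_region u) t = layer u t.
Proof.
rewrite /layer; apply/seteqP; split => x;
  rewrite /ysection /= inE /layer_region /=; case: ifPn => t0 /=.
- by move=> [[_ tu]|[ut t0']] //; have := lt_le_trans t0' t0; rewrite ltxx.
- by move=> [[]|[ut _]] //; apply/negP; rewrite -leNgt.
- by move=> tu; left.
- by move=> /negP; rewrite -leNgt => ut; right; split => //; rewrite ltNge.
Qed.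

Lemma xsection_layer_region u x :
  xsection (layer_region u) x =
  if (0 <= u x)%R then `[0%R, u x[%classic else `[u x, 0%R[%classic.
Proof.
apply/seteqP; split => t; rewrite /xsection /= inE /layer_region /=;
  case: ifPn => ux; rewrite /= in_itv /=.
- move=> [[t0 tu]|[ut t0]]; first by rewrite t0 tu.
  by have := le_lt_trans ux (le_lt_trans ut t0); rewrite ltxx.
- move=> [[t0 tu]|[ut t0]]; last by rewrite ut t0.
  by move: ux; rewrite (le_trans t0 (ltW tu)).
- by move=> /andP[t0 tu]; left.
- by move=> /andP[t0 tu]; right.
Qed.

Lemma measurable_fun_measure_layer u : measurable_fun setT u ->
  measurable_fun setT (fun t : RLeb R => mu (layer u t)).
Proof.
move=> meas_u; have mS := measurable_layer_region _ meas_u.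
have := indic_measurable_fun_fubini_tonelli_G mu' mS.
rewrite (indic_fubini_tonelli_GE _ mS); congr measurable_fun.
by apply/funext => t /=; rewrite ysection_layer_region.
Qed.

Lemma layer_cake u : measurable_fun setT u ->
  \int[mu]_x `|(u x)%:E| =
  \int[@completed_lebesgue_measure R]_(t in (setT : set (RLeb R))) mu (layer u t).
Proof.
move=> meas_u; have mS := measurable_layer_region _ meas_u.
have := indic_fubini_tonelli mu' (@completed_lebesgue_measure R) mS.
rewrite (indic_fubini_tonelli_FE _ mS) (indic_fubini_tonelli_GE _ mS) => tonelli.
transitivity (\int[mu']_x
    (@completed_lebesgue_measure R \o xsection (layer_region u)) x).
  apply: eq_integral => x _ /=; rewrite xsection_layer_region.
  case: ifPn => ux; rewrite completed_lebesgue_measure_itv /= lte_fin.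
    by case: ltgtP ux => // [ux _|<- _]; rewrite ?sube0 ?normr0 // ger0_norm // ltW.
  by move: ux; rewrite -ltNge => ux; rewrite ux add0e ltr0_norm.
by rewrite tonelli; apply: eq_integral => t _ /=; rewrite ysection_layer_region.
Qed.

End layer_cake.

Section perimeter.
Context {d : measure_display} {T : measurableType d} {R : realType}.
Variables (mu : {measure set T -> \bar R}) (P : set T -> \bar R).
Hypothesis P_ge0 : P_nonneg P.
Implicit Types (u : T -> R) (A Om : set T).

Lemma nonzero_indic A : [set x | (\1_A : T -> R) x != 0%R] = A.
Proof.
apply/seteqP; split => x /=; rewrite indicE.
  by case: (boolP (x \in A)) => [/set_mem //|_]; rewrite eqxx.
by move=> /mem_set ->; rewrite oner_neq0.
Qed.

Lemma integral_abs_indic D A : measurable D -> measurable A ->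
  \int[mu]_(x in D) `|((\1_A : T -> R) x)%:E| = mu (A `&` D).
Proof.
move=> mD mA; rewrite -integral_indic //.
by apply: eq_integral => x _; rewrite gee0_abs // lee_fin indicE; case: (_ \in _).
Qed.

Lemma norm1_indic A : measurable A -> norm1 mu (\1_A : T -> R) = mu A.
Proof. by move=> mA; rewrite /norm1 integral_abs_indic // setIT. Qed.

Lemma Var_indic A : P1 P -> P2 P -> measurable A -> Var P (\1_A : T -> R) = P A.
Proof.
move=> P1h P2h mA.
pose I01 := (`[0%R, 1%R[%classic : set (RLeb R)).
have mI01 : measurable I01 by exact: sub_caratheodory (measurable_itv _).
have superlevel : (fun t : RLeb R => P [set x | (t < (\1_A : T -> R) x)%R]) =
    (fun t => P A * ((\1_I01 : RLeb R -> R) t)%:E).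
  apply/funext => t /=; rewrite indicE mem_RLeb_co01.
  have [t0|t0] := ltP t 0%R.
    have -> : [set x | (t < (\1_A : T -> R) x)%R] = setT.
      apply/seteqP; split => x //= _; rewrite indicE; apply: (lt_le_trans t0).
      by case: (_ \in _).
    by rewrite P2h mule0.
  have [t1|t1] := ltP t 1%R.
    have -> : [set x | (t < (\1_A : T -> R) x)%R] = A.
      apply/seteqP; split => x /=; rewrite indicE.
        by case: (boolP (x \in A)) => [/set_mem //|_]; rewrite ltNge t0.
      by move=> /mem_set ->.
    by rewrite mule1.
  have -> : [set x | (t < (\1_A : T -> R) x)%R] = set0.
    apply/seteqP; split => x //=; rewrite indicE.
    by case: (_ \in _); rewrite ltNge ?t1 // (le_trans _ t1).
  by rewrite P1h /= mule0.
have mf : measurable_fun setT (fun t : RLeb R => ((\1_I01 : RLeb R -> R) t)%:E).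
  by apply/measurable_EFinP; exact: measurable_indic.
rewrite /Var superlevel asboolT; last exact: measurable_funeM.
rewrite ge0_integralZl ?integral_indic ?setIT //; last exact: P_ge0.
change (P A * @completed_lebesgue_measure R I01 = P A).
suff -> : @completed_lebesgue_measure R I01 = 1 by rewrite mule1.
by rewrite completed_lebesgue_measure_itv /= lte_fin ltr01 sube0.
Qed.

Lemma BV0_indic Om A : P1 P -> P2 P -> measurable Om -> measurable A ->
  msub mu A Om -> mu A < +oo -> P A < +oo -> BV0 mu P Om (\1_A : T -> R).
Proof.
move=> P1h P2h mOm mA sA Afin PAfin; split; first split.
- exact: measurable_indic.
- split; last by rewrite Var_indic.
  apply/integrableP; split; first by apply/measurable_EFinP; exact: measurable_indic.
  by have := norm1_indic _ mA; rewrite /norm1 => ->.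
by rewrite integral_abs_indic //; exact: measurableC.
Qed.

Lemma Lambda_le_h N Om : P1 P -> P2 P -> measurable Om ->
  Lambda_ mu P N Om <= h_ mu P N Om.
Proof.
move=> P1h P2h mOm; apply: le_ereal_inf_tmp => _ [E [[mE sE pE fE dE] ->]].
apply: ereal_inf_lbound; exists (fun i => \1_(E i) : T -> R); split.
  split => [i|i|i j ij].
  - by apply: BV0_indic => //; have /andP[] := pE i.
  - by rewrite norm1_indic //; have /andP[] := pE i.
  - by rewrite !nonzero_indic dE.
by congr EFin; apply: eq_bigr => i _; rewrite Var_indic // norm1_indic.
Qed.

Lemma h_ge0 N Om : 0 <= h_ mu P N Om.
Proof.
apply: le_ereal_inf_tmp => _ [E [[mE _ _ _ _] ->]].
rewrite lee_fin; apply: sumr_ge0 => i _.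
by apply: divr_ge0; apply: fine_ge0; [exact: P_ge0|exact: measure_ge0].
Qed.

Lemma h1_le_ratio Om A : measurable A -> msub mu A Om ->
  0 < mu A < +oo -> P A < +oo ->
  h_ mu P 1 Om <= (fine (P A) / fine (mu A))%:E.
Proof.
move=> mA sA muA PAfin; apply: ereal_inf_lbound.
exists (fun _ : 'I_1 => A); split; last by rewrite big_ord1.
by split => // i j; rewrite !ord1.
Qed.

Lemma h1_lt_pinfty N Om : (0 < N)%N -> admissible mu P N Om ->
  h_ mu P 1 Om < +oo.
Proof.
move=> N0 [E [mE sE pE fE _]]; pose i0 := Ordinal N0.
exact: le_lt_trans (h1_le_ratio _ _ (mE i0) (sE i0) (pE i0) (fE i0)) (ltry _).
Qed.

Lemma msub_lt_pinfty Om A : measurable Om -> measurable A ->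
  msub mu A Om -> mu Om < +oo -> mu A < +oo.
Proof.
move=> mOm mA sA Omfin; have mAOm := measurableD mA mOm.
have AOm : mu A <= mu (Om `|` (A `\` Om)).
  apply: le_measure; rewrite ?inE //; first exact: measurableU.
  by move=> x Ax; have [Omx|nOmx] := pselect (Om x); [left|right].
apply: le_lt_trans AOm (le_lt_trans (measureU2 _ mOm mAOm) _).
by rewrite -[X in _ + X]/(mu (A `\` Om)) sA adde0.
Qed.

Lemma BV0_msub_nonzero Om u A : measurable Om -> BV0 mu P Om u ->
  measurable A -> A `<=` [set x | u x != 0%R] -> msub mu A Om.
Proof.
move=> mOm [[meas_u _] u_out0] mA Au.
have mOmC := measurableC mOm.
have mf : measurable_fun (~` Om) (EFin \o u).
  by apply/measurable_EFinP; exact: measurable_funS meas_u.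
have [N [mN N0 out0N]] := (ae_eq_integral_abs mu mOmC mf).1 u_out0.
apply: subset_measure0 (measurableD mA mOm) mN _ N0 => x [Ax nOmx].
by apply: out0N => /(_ nOmx) [] /eqP; rewrite (negbTE (Au x Ax)).
Qed.

Section h1_bound.
Variable Om : set T.
Hypotheses (mOm : measurable Om) (Omfin : mu Om < +oo).
Local Notation h1 := (h_ mu P 1 Om).

Lemma h1_mul_measure_le A : measurable A -> msub mu A Om -> h1 * mu A <= P A.
Proof.
move=> mA sA; have Afin := msub_lt_pinfty _ _ mOm mA sA Omfin.
have [->|muA0] := eqVneq (mu A) 0; first by rewrite mule0 P_ge0.
have [->|PAfin] := eqVneq (P A) +oo; first by rewrite leey.
have muA : 0 < mu A < +oo by rewrite lt0e muA0 measure_ge0 Afin.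
have muAf : mu A \is a fin_num by rewrite ge0_fin_numE.
have PAf : P A \is a fin_num by rewrite ge0_fin_numE ?ltey //; exact: P_ge0.
have PAlt : P A < +oo by rewrite ltey.
apply: le_trans (lee_wpmul2r (measure_ge0 mu A)
  (h1_le_ratio _ _ mA sA muA PAlt)) _.
by rewrite -[X in _ * X](fineK muAf) -EFinM divfK ?fineK // gt_eqF // fine_gt0.
Qed.

Hypothesis P_compl : P7 P.
Hypothesis mu_sigma_finite : sigma_finite setT mu.

Lemma h1_norm1_le_Var u : BV0 mu P Om u -> h1 * norm1 mu u <= Var P u.
Proof.
move=> BVu; have [[meas_u [_ Vfin]] _] := BVu.
move: Vfin; rewrite /Var; case: asboolP => [mP _|_]; last by rewrite ltxx.
have mlayer := measurable_fun_measure_layer _ mu_sigma_finite _ meas_u.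
rewrite /norm1 (layer_cake _ mu_sigma_finite _ meas_u) -ge0_integralZl //;
  last exact: h_ge0.
have layer_ge0 (t : RLeb R) : setT t -> 0 <= h1 * mu (layer u t).
  by move=> _; apply: mule_ge0; [exact: h_ge0|exact: measure_ge0].
have mhlayer : measurable_fun setT (fun t : RLeb R => h1 * mu (layer u t)).
  exact: measurable_funeM.
apply: (ge0_le_integral _ measurableT layer_ge0 mhlayer mP).
move=> t _; have mlt : measurable [set x | (t < u x)%R].
  exact: measurable_ltr_set (measurable_cst _) meas_u.
rewrite /layer; case: ifPn => t0.
  apply: h1_mul_measure_le => //; apply: BV0_msub_nonzero BVu mlt _ => //.
  by move=> x /= tx; rewrite gt_eqF // (le_lt_trans t0 tx).
rewrite (P_compl _ mlt); have mltC := measurableC mlt.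
apply: h1_mul_measure_le => //; apply: BV0_msub_nonzero BVu mltC _ => //.
move=> x /= /negP; rewrite -leNgt => ux.
by rewrite lt_eqF // (le_lt_trans ux) // ltNge.
Qed.

Lemma h1_le_Rayleigh u : h1 \is a fin_num -> BV0 mu P Om u -> 0 < norm1 mu u ->
  (fine h1 <= fine (Var P u) / fine (norm1 mu u))%R.
Proof.
move=> h1f BVu norm1_gt0; have h1_le := h1_norm1_le_Var _ BVu.
have [[_ [/integrableP[_ norm1_lt] _]] _] := BVu.
have norm1_ge0 : 0 <= norm1 mu u by exact: integral_ge0.
have norm1f : norm1 mu u \is a fin_num by rewrite ge0_fin_numE.
have Varf : Var P u \is a fin_num.
  rewrite ge0_fin_numE; last by rewrite (le_trans _ h1_le) // mule_ge0 ?h_ge0.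
  by have [[_ []]] := BVu.
have norm1_pos : (0 < fine (norm1 mu u))%R.
  by apply: fine_gt0; rewrite norm1_gt0 -ge0_fin_numE.
by rewrite ler_pdivlMr // -lee_fin EFinM !fineK.
Qed.

Lemma h1_le_Lambda N : h1 < +oo -> N%:R%:E * h1 <= Lambda_ mu P N Om.
Proof.
move=> h1_lt; have h1f : h1 \is a fin_num by rewrite ge0_fin_numE ?h_ge0.
apply: le_ereal_inf_tmp => _ [u [[BVu norm1_gt0 _] ->]].
rewrite -(fineK h1f) -EFinM lee_fin.
have -> : (N%:R * fine h1 = \sum_(i < N) fine h1)%R.
  by rewrite sumr_const card_ord mulr_natl.
by apply: ler_sum => i _; apply: h1_le_Rayleigh.
Qed.

End h1_bound.
End perimeter.

Theorem theorem5p4 (d : measure_display) (T : measurableType d) (R : realType)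
  (mu : {measure set T -> \bar R}) (P : set T -> \bar R) :
  sigma_finite setT mu ->
  P_nonneg P -> P_proper P -> P_null_invariant mu P ->
  P1 P -> P2 P ->
  forall (N : nat) (Om : set T),
  (0 < N)%N -> measurable Om -> admissible mu P N Om ->
  0 < mu Om < +oo ->
  Lambda_ mu P N Om <= h_ mu P N Om /\
  (P4 mu P -> P7 P ->
     (N%:R)%:E * h_ mu P 1 Om <= Lambda_ mu P N Om /\
     h_ mu P 1 Om = lambda11 mu P Om).
Proof.
move=> mu_sf P_ge0 _ _ P1h P2h N Om N_gt0 mOm OmN /andP[_ Om_lt].
split; first exact: Lambda_le_h.
move=> _ P7h.
have h1_lt : h_ mu P 1 Om < +oo by exact: h1_lt_pinfty N_gt0 OmN.
have h1_le_Lambda_ M : M%:R%:E * h_ mu P 1 Om <= Lambda_ mu P M Om.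
  exact: h1_le_Lambda.
split; first exact: h1_le_Lambda_.
apply: le_anti; rewrite Lambda_le_h // andbT.
by have := h1_le_Lambda_ 1%N; rewrite mul1e.
Qed.
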